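(* Let $(\Gamma,\psi)$ be an $H$-asymptotic couple with asymptotic integration. Suppose $\alpha\in(\Gamma^{<})'$ and $n\ge1$. Then $\alpha+(n+1)(s(\alpha)-\alpha)\in(\Gamma^{>})'$.
   Context: An asymptotic couple is a pair $(\Gamma,\psi)$ with $\Gamma$ an ordered abelian group and $\psi:\Gamma\setminus\{0\}\to\Gamma$ such that for all nonzero $\alpha,\beta$: $\alpha+\beta\ne0\Rightarrow\psi(\alpha+\beta)\ge\min(\psi(\alpha),\psi(\beta))$; $\psi(k\alpha)=\psi(\alpha)$ for $k\in\mathbb{Z}\setminus\{0\}$; $\alpha>0\Rightarrow\alpha+\psi(\alpha)>\psi(\beta)$. $H$-asymptotic: $0<\alpha\le\beta\Rightarrow\psi(\alpha)\ge\psi(\beta)$. Write $\gamma'=\gamma+\psi(\gamma)$ for $\gamma\ne0$, $(\Gamma^{>})'=\{\gamma':\gamma>0\}$, $(\Gamma^{<})'=\{\gamma':\gamma<0\}$. Asymptotic integration: every $\alpha\in\Gamma$ equals $\gamma'$ for a (necessarily unique) $\gamma\ne0$, denoted $\int\alpha$. The successor function is $s(\alpha)=\psi(\int\alpha)$. *)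

From HB Require Import structures.
From mathcomp Require Import all_boot all_order all_algebra.
From Stdlib Require Import ClassicalEpsilon.
Set Implicit Arguments. Unset Strict Implicit. Unset Printing Implicit Defensive.
Import GRing.Theory.
Local Open Scope ring_scope.

Definition ordered_abelian_group (G : zmodType) (le : rel G) : Prop :=
  [/\ reflexive le, antisymmetric le, transitive le, total le
    & forall x y z : G, le x y -> le (x + z) (y + z)].

Definition ltg (G : zmodType) (le : rel G) (x y : G) : bool := le x y && (x != y).

(* psi is only meaningful on G \ {0}; its value at 0 is irrelevant. *)
Definition asymptotic_couple (G : zmodType) (le : rel G) (psi : G -> G) : Prop :=
  [/\ forall a b : G, a != 0 -> b != 0 -> a + b != 0 ->
        le (psi a) (psi (a + b)) || le (psi b) (psi (a + b)),
      forall (a : G) (k : int), a != 0 -> k != 0 -> psi (a *~ k) = psi a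
    & forall a b : G, a != 0 -> b != 0 -> ltg le 0 a -> ltg le (psi b) (a + psi a)].

Definition H_asymptotic (G : zmodType) (le : rel G) (psi : G -> G) : Prop :=
  forall a b : G, a != 0 -> b != 0 -> ltg le 0 a -> le a b -> le (psi b) (psi a).

Definition dprime (G : zmodType) (psi : G -> G) (g : G) : G := g + psi g.

Definition in_pos_prime (G : zmodType) (le : rel G) (psi : G -> G) (a : G) : Prop :=
  exists g : G, ltg le 0 g /\ dprime psi g = a.
Definition in_neg_prime (G : zmodType) (le : rel G) (psi : G -> G) (a : G) : Prop :=
  exists g : G, ltg le g 0 /\ dprime psi g = a.

Definition has_asymptotic_integration (G : zmodType) (psi : G -> G) : Prop :=
  forall a : G, exists g : G, g != 0 /\ dprime psi g = a.

Definition aint (G : zmodType) (psi : G -> G) (a : G) : G :=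
  epsilon (inhabits (0 : G)) (fun g : G => g != 0 /\ dprime psi g = a).

Definition succ_fun (G : zmodType) (psi : G -> G) (a : G) : G := psi (aint psi a).

(* Write alpha = g' with g < 0.  Since gamma |-> gamma' is injective on
   nonzero elements, the integral of alpha is g, so s(alpha) - alpha = -g and
   alpha + (n+1)(s(alpha) - alpha) = -ng + psi(g) = (-ng)', because psi is
   invariant under nonzero integer multiples.  As -ng > 0 this lies in
   (Gamma^>)'. *)

From mathcomp Require Import all_boot all_order all_algebra.
From Stdlib Require Import ClassicalEpsilon.
Import GRing.Theory.
Local Open Scope ring_scope.
Set Implicit Arguments. Unset Strict Implicit.

Section OrderedAbelianGroup.
Variables (G : zmodType) (le : rel G).
Hypothesis hG : ordered_abelian_group le.
Local Notation lt := (ltg le).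

Lemma le_trans_oag y x z : le x y -> le y z -> le x z.
Proof. by case: hG => _ _ tr _ _; apply: tr. Qed.

Lemma lt_nle_oag x y : lt x y -> ~~ le y x.
Proof.
case: hG => _ anti _ _ _ /andP [lexy neqxy]; apply/negP => leyx.
by move: neqxy; rewrite (anti x y) ?lexy ?leyx ?eqxx.
Qed.

Lemma lt_trans_oag y x z : lt x y -> lt y z -> lt x z.
Proof.
move=> ltxy ltyz; rewrite /ltg (le_trans_oag (andP ltxy).1 (andP ltyz).1) /=.
by apply/eqP => exz; move: ltxy; rewrite exz => /lt_nle_oag; rewrite (andP ltyz).1.
Qed.

Lemma leD2r z x y : le x y -> le (x + z) (y + z).
Proof. by case: hG => _ _ _ _; apply. Qed.

Lemma ltD2r z x y : lt x y -> lt (x + z) (y + z).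
Proof. by case/andP=> lexy neqxy; rewrite /ltg leD2r // (inj_eq (addIr z)). Qed.

Lemma ltD2l z x y : lt x y -> lt (z + x) (z + y).
Proof. by rewrite ![z + _]addrC; apply: ltD2r. Qed.

Lemma ltD2lE z x y : lt (z + x) (z + y) = lt x y.
Proof.
apply/idP/idP; last exact: ltD2l.
by move/(ltD2l (- z)); rewrite !addKr.
Qed.

Lemma oppr_gt0_oag x : lt x 0 -> lt 0 (- x).
Proof. by move/(ltD2r (- x)); rewrite subrr add0r. Qed.

Lemma addr_gt0_oag x y : lt 0 x -> lt 0 y -> lt 0 (x + y).
Proof. by move=> x0 y0; apply: lt_trans_oag x0 _; rewrite -{1}[x]addr0 ltD2l. Qed.

Lemma pmulrn_gt0_oag x n : lt 0 x -> (0 < n)%N -> lt 0 (x *+ n).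
Proof.
move=> x0; elim: n => // [[_ _ | n IH _]]; first by rewrite mulr1n.
by rewrite mulrS addr_gt0_oag ?IH.
Qed.

End OrderedAbelianGroup.

Section AsymptoticCouple.
Variables (G : zmodType) (le : rel G) (psi : G -> G).
Hypothesis hG : ordered_abelian_group le.
Hypothesis hAC : asymptotic_couple le psi.
Local Notation lt := (ltg le).

Lemma psi_mulrz x k : x != 0 -> k != 0 -> psi (x *~ k) = psi x.
Proof. by case: hAC => _ h _; apply: h. Qed.

Lemma psi_opp x : x != 0 -> psi (- x) = psi x.
Proof. by move=> x0; rewrite -mulrN1z psi_mulrz. Qed.

Lemma psi_mulrn x n : x != 0 -> (0 < n)%N -> psi (x *+ n) = psi x.
Proof. by move=> x0 n0; rewrite pmulrn psi_mulrz // eqz_nat -lt0n. Qed.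

(* With d := a - b > 0 one gets psi b = psi a + d > psi a, so the ultrametric
   inequality for psi (b + d) = psi a forces psi a >= psi d; but then the third
   axiom gives psi a + d = psi b < d + psi d. *)
Lemma dprime_lt_neq a b : a != 0 -> b != 0 -> lt b a ->
  dprime psi a != dprime psi b.
Proof.
move=> a0 b0 ltba; apply/eqP => eab.
set d := a - b.
have d0 : lt 0 d by rewrite /d -(subrr b) ltD2r.
have nzd : d != 0 by rewrite eq_sym; case/andP: d0.
have psib : psi b = psi a + d.
  apply: (addrI b); rewrite -[LHS]/(dprime psi b) -eab /d.
  by rewrite addrCA [b + _]addrC addrNK addrC.
have psia_lt_psib : lt (psi a) (psi b) by rewrite psib -{1}[psi a]addr0 ltD2l.
have bd : b + d = a by rewrite /d addrC addrNK.
case: hAC => ultra _ dom.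
have nzbd : b + d != 0 by rewrite bd.
case/orP: (ultra b d b0 nzd nzbd); rewrite bd.
- by apply/negP/lt_nle_oag.
- apply/negP/lt_nle_oag => //.
  by rewrite -(ltD2lE hG d) [d + psi a]addrC -psib; apply: dom.
Qed.

Lemma dprime_inj a b : a != 0 -> b != 0 -> dprime psi a = dprime psi b -> a = b.
Proof.
move=> a0 b0 eab; apply/eqP/negPn/negP => neqab.
case: hG => _ _ _ tot _.
case/orP: (tot a b) => [leab | leba].
- have ltab : lt a b by rewrite /ltg leab neqab.
  by move: (dprime_lt_neq b0 a0 ltab); rewrite eab eqxx.
- have ltba : lt b a by rewrite /ltg leba eq_sym neqab.
  by move: (dprime_lt_neq a0 b0 ltba); rewrite eab eqxx.
Qed.

Lemma aint_dprime g : g != 0 -> aint psi (dprime psi g) = g.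
Proof.
move=> g0; rewrite /aint.
have [hne he] := epsilon_spec (inhabits (0 : G))
  (fun h => h != 0 /\ dprime psi h = dprime psi g) (ex_intro _ g (conj g0 erefl)).
exact: dprime_inj.
Qed.

Lemma succ_fun_dprime g : g != 0 -> succ_fun psi (dprime psi g) = psi g.
Proof. by move=> g0; rewrite /succ_fun aint_dprime. Qed.

Lemma dprime_add_mulrn g n : g != 0 -> (0 < n)%N ->
  dprime psi g + (psi g - dprime psi g) *+ n.+1 = dprime psi ((- g) *+ n).
Proof.
move=> g0 n0; rewrite /dprime psi_mulrn ?oppr_eq0 // psi_opp //.
by rewrite [psi g - _]addrC opprD addrNK mulrS addrA [g + psi g]addrC addrK addrC.
Qed.

End AsymptoticCouple.

Theorem lemma3p10 (G : zmodType) (le : rel G) (psi : G -> G)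
  (hG : ordered_abelian_group le)
  (hAC : asymptotic_couple le psi)
  (hH : H_asymptotic le psi)
  (hAI : has_asymptotic_integration psi)
  (alpha : G) (halpha : in_neg_prime le psi alpha)
  (n : nat) (hn : (1 <= n)%N) :
  in_pos_prime le psi (alpha + (succ_fun psi alpha - alpha) *+ n.+1).
Proof.
case: halpha => g [g_lt0 <-].
have g0 : g != 0 by case/andP: g_lt0.
exists ((- g) *+ n); split.
- by apply: (pmulrn_gt0_oag hG) => //; apply: oppr_gt0_oag.
- by rewrite (succ_fun_dprime hG hAC) // (dprime_add_mulrn hAC).
Qed.
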